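(* Let $p_j>0$, $q_{j+1}>0$, $r_j\ge 0$ ($j\ge 0$) be the one-step transition probabilities of a random walk on $\mathcal{N}=\{0,1,2,\dots\}$ (up-step $p_j$, holding $r_j$, down-step $q_j$ from state $j$), with $q_0:=0$ and $p_j+q_j+r_j=1$ for all $j\ge0$. Define polynomials $Q_n$ by $Q_0(x)=1$, $p_0Q_1(x)=x-r_0$, and $xQ_n(x)=q_nQ_{n-1}(x)+r_nQ_n(x)+p_nQ_{n+1}(x)$ for $n\ge 1$. Let $\psi$ be the unique Borel probability measure on $[-1,1]$ with infinite support with respect to which the $Q_n$ are orthogonal, let $\eta:=\sup\operatorname{supp}(\psi)$, and let $\theta\ge\eta$. If the random walk is periodic (i.e. $r_j=0$ for all $j$), then $|Q_n(\theta)/Q_n(-\theta)|=1$ for all $n$. If the random walk is aperiodic (i.e. $r_j>0$ for some $j$), then $|Q_n(\theta)/Q_n(-\theta)|$ is decreasing in $n$ and tends to a limit satisfying \[0\le\lim_{n\to\infty}|Q_n(\theta)/Q_n(-\theta)|<1.\]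
   Context: It is known that $\eta>0$ and that $Q_n(x)>0$ for all $n\ge0$ whenever $x\ge\eta$. *)

From HB Require Import structures.
From mathcomp Require Import all_boot all_order all_algebra.
From mathcomp Require Import all_classical all_reals all_analysis.
Set Implicit Arguments. Unset Strict Implicit. Unset Printing Implicit Defensive.
Import Order.TTheory GRing.Theory Num.Theory.
Import numFieldNormedType.Exports.
Local Open Scope classical_set_scope.
Local Open Scope ring_scope.

Fixpoint Qpair (R : realType) (p q r : nat -> R) (n : nat) (x : R) : R * R :=
  match n with
  | 0%N => (1, (x - r 0%N) / p 0%N)
  | m.+1 => let: (a, b) := Qpair p q r m x in
            (b, ((x - r m.+1) * b - q m.+1 * a) / p m.+1)
  end.

Definition Qn (R : realType) (p q r : nat -> R) (n : nat) (x : R) : R :=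
  (Qpair p q r n x).1.

Definition msupport (R : realType) (mu : set R -> \bar R) : set R :=
  [set x | forall U : set R, open U -> U x -> (0 < mu U)%E].

(* Fix t >= sup (supp psi).  No Q_n vanishes at t: if Q_(m+1)(t) = 0, the
   Christoffel-Darboux formula writes (t - x) S(x)^2, with
   S(x) = sum_(k <= m) pi_k Q_k(t) Q_k(x), as Q_(m+1)(x) times a polynomial of
   lower degree, so it has psi-integral 0 by orthogonality; being nonnegative
   psi-almost everywhere (psi does not charge ]t, +oo[) it vanishes on the
   infinite support of psi, hence identically, which fails for large x.  As
   Q_n(x) > 0 for x >= 1, continuity gives Q_n(t) > 0.
   With a_n = Q_n(theta), b_n = (-1)^n Q_n(-theta), the Casoratian
   E_n = a_(n+1) b_n - a_n b_(n+1) satisfies p_n E_n = -2 r_n a_n b_n + q_n E_(n-1),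
   so inductively b_n > 0 and E_n <= 0, with E_j < 0 when r_j > 0.  Since
   a_n/b_n - a_(n+1)/b_(n+1) = -E_n / (b_n b_(n+1)), the ratio a_n/b_n, which is
   |Q_n(theta)/Q_n(-theta)|, is nonincreasing and drops strictly below 1 at an
   aperiodic state.  In the periodic case Q_n has the parity of n. *)

From HB Require Import structures.
From mathcomp Require Import all_boot all_order all_algebra.
From mathcomp Require Import all_classical all_reals all_analysis.
From mathcomp Require Import ring lra measurable_realfun.
From mathcomp Require finmap.
Import Order.TTheory GRing.Theory Num.Theory.
Import numFieldNormedType.Exports.
Local Open Scope classical_set_scope.
Local Open Scope ring_scope.

Lemma continuous_gt0_noroot_ge {R : realType} (f : R -> R) (t y : R) :
  continuous f -> (forall x, t <= x -> f x != 0) -> t <= y -> 0 < f y ->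
  0 < f t.
Proof.
move=> cf noroot ty fy; rewrite lt_neqAle eq_sym noroot //= leNgt.
apply/negP => ft.
have [c /andP[tc _] fc] : exists2 c, c \in `[t, y] & f c = 0.
  apply: IVT => //; first exact: continuous_subspaceT.
  by rewrite ge_min le_max (ltW ft) (ltW fy) orbT.
by move: (noroot c tc); rewrite fc eqxx.
Qed.

Lemma nonincreasing_cvgn_lt {R : realType} (u : R ^nat) (j : nat) (c : R) :
  nonincreasing_seq u -> (forall n, 0 <= u n) -> u j < c ->
  exists l, u @ \oo --> l /\ 0 <= l < c.
Proof.
move=> u_noninc u_ge0 uj_c.
have u_cvg : cvgn u.
  by apply: nonincreasing_is_cvgn => //; exists 0 => _ [n _ <-].
exists (limn u); split => //; apply/andP; split.
  by apply: limr_ge => //; near=> n; exact: u_ge0.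
exact: le_lt_trans (nonincreasing_cvgn_ge u_noninc u_cvg j) uj_c.
Unshelve. all: by end_near.
Qed.

Section PolynomialFunctions.
Context {R : realType}.

Definition polyfun (f : R -> R) := exists P : {poly R}, f =1 horner P.

Lemma polyfun_cst (c : R) : polyfun (fun=> c).
Proof. by exists c%:P => x; rewrite hornerC. Qed.

Lemma polyfunM (f g : R -> R) :
  polyfun f -> polyfun g -> polyfun (fun x => f x * g x).
Proof. by move=> [P fP] [Q gQ]; exists (P * Q) => x; rewrite hornerM fP gQ. Qed.

Lemma polyfun_sum n (F : 'I_n -> R -> R) :
  (forall i, polyfun (F i)) -> polyfun (fun x => \sum_(i < n) F i x).
Proof.
elim: n F => [|n IH] F FP.
  by exists 0 => x; rewrite big_ord0 horner0.
have [P FnP] := FP ord_max.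
have [S FS] := IH (fun i => F (widen_ord (leqnSn n) i)) (fun i => FP _).
by exists (S + P) => x; rewrite big_ord_recr hornerD -FS -FnP.
Qed.

Lemma polyfun_continuous (f : R -> R) : polyfun f -> continuous f.
Proof.
by move=> [P fP]; rewrite (funext fP); exact: continuous_horner.
Qed.

Lemma polyfun_eq0 (f : R -> R) :
  polyfun f -> infinite_set [set x | f x = 0] -> forall x, f x = 0.
Proof.
move=> [P fP] f0 x; rewrite fP.
have [B Bf0 szB] := infinite_set_fset (size P) f0.
suff -> : P = 0 by rewrite horner0.
apply: (@roots_geq_poly_eq0 _ P (finmap.enum_fset B)) => //.
  by apply/allP => y yB; rewrite /root -fP; apply/eqP/Bf0.
exact: finmap.fset_uniq.
Qed.

End PolynomialFunctions.

Fixpoint potential {R : realType} (p q : nat -> R) n : R :=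
  if n is m.+1 then potential p q m * p m / q m.+1 else 1.

Section Recurrence.
Context {R : realType}.
Context {p q r : nat -> R}.
Hypothesis p_gt0 : forall j, 0 < p j.
Hypothesis q0 : q 0%N = 0.

Notation Q := (Qn p q r).

Lemma Qn0 x : Q 0 x = 1. Proof. by []. Qed.

Lemma Qn1 x : Q 1 x = (x - r 0%N) / p 0%N. Proof. by []. Qed.

Lemma QnSS n x :
  Q n.+2 x = ((x - r n.+1) * Q n.+1 x - q n.+1 * Q n x) / p n.+1.
Proof. by rewrite /Qn /=; case: (Qpair p q r n x). Qed.

(* At n = 0 the truncated index n.-1 is harmless since q 0 = 0. *)
Lemma Qn_rec n x : p n * Q n.+1 x = (x - r n) * Q n x - q n * Q n.-1 x.
Proof.
case: n => [|n]; last by rewrite QnSS mulrC divfK ?gt_eqF.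
by rewrite Qn1 Qn0 q0 mul0r subr0 mulr1 mulrC divfK ?gt_eqF.
Qed.

Lemma Qn_polyfun n : polyfun (Q n).
Proof.
suff [A [B [QA QB]]] : exists A B : {poly R}, Q n =1 horner A /\ Q n.+1 =1 horner B.
  by exists A.
elim: n => [|n [A [B [QA QB]]]].
  exists 1, (('X - (r 0%N)%:P) * (p 0%N)^-1%:P).
  by split => x; rewrite ?Qn1 !hornerE.
exists B, ((('X - (r n.+1)%:P) * B - (q n.+1)%:P * A) * (p n.+1)^-1%:P).
by split => // x; rewrite QnSS !hornerE -QA -QB.
Qed.

Lemma QnN (r0 : forall j, r j = 0) n x : Q n (- x) = (-1) ^+ n * Q n x.
Proof.
suff [] : Q n (- x) = (-1) ^+ n * Q n x /\ Q n.+1 (- x) = (-1) ^+ n.+1 * Q n.+1 x.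
  by [].
elim: n => [|n [IH1 IH2]]; first by rewrite !Qn0 !Qn1 r0 !subr0 mul1r; split=> //; ring.
by split => //; rewrite !QnSS !r0 !subr0 IH1 IH2 !exprS; ring.
Qed.

Hypothesis q_gt0 : forall j, 0 < q j.+1.

Lemma Qn_neq0_of_QnS_root n t : Q n.+1 t = 0 -> Q n t != 0.
Proof.
elim: n => [|n IH] Qt; first by rewrite Qn0 oner_eq0.
apply/eqP => Qt'; move/negP: (IH Qt'); apply; apply/eqP.
have := Qn_rec n.+1 t; rewrite /= Qt Qt' !mulr0 sub0r => /esym/eqP.
by rewrite oppr_eq0 mulf_eq0 gt_eqF //= => /eqP.
Qed.

Lemma potential_gt0 n : 0 < potential p q n.
Proof. by elim: n => [|n IH] //=; rewrite divr_gt0 ?mulr_gt0. Qed.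

Lemma christoffel_darboux m x y :
  (x - y) * \sum_(k < m.+1) potential p q k * Q k y * Q k x =
  potential p q m * p m * (Q m.+1 x * Q m y - Q m x * Q m.+1 y).
Proof.
elim: m => [|m IH].
  by rewrite big_ord1 /= !Qn1 !Qn0; field; rewrite gt_eqF.
rewrite big_ord_recr /= mulrDr IH.
transitivity (potential p q m.+1 *
  ((p m.+1 * Q m.+2 x) * Q m.+1 y - Q m.+1 x * (p m.+1 * Q m.+2 y))); last first.
  by rewrite /=; ring.
by rewrite !Qn_rec /=; field; rewrite gt_eqF.
Qed.

Hypothesis r_ge0 : forall j, 0 <= r j.
Hypothesis pqr_sum : forall j, p j + q j + r j = 1.

Lemma Qn_gt0_ge1 n x : 1 <= x -> 0 < Q n x.
Proof.
move=> x1; suff /andP[] : 0 < Q n x <= Q n.+1 x by [].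
elim: n => [|n /andP[Qn_gt0 Qn_le]].
  rewrite Qn0 Qn1 ltr01 /= ler_pdivlMr // mul1r.
  by have := pqr_sum 0%N; rewrite q0 addr0; lra.
rewrite (lt_le_trans Qn_gt0 Qn_le) /= -(ler_pM2l (p_gt0 n.+1)) Qn_rec /=.
have := p_gt0 n.+1; have := q_gt0 n; have := r_ge0 n.+1; have := pqr_sum n.+1.
nra.
Qed.

End Recurrence.

Section Ratio.
Context {R : realType}.
Context {p q r : nat -> R}.
Hypothesis p_gt0 : forall j, 0 < p j.
Hypothesis q_gt0 : forall j, 0 < q j.+1.
Hypothesis r_ge0 : forall j, 0 <= r j.
Hypothesis q0 : q 0%N = 0.
Context {th : R}.
Hypothesis Qth_gt0 : forall n, 0 < Qn p q r n th.

Notation Q := (Qn p q r).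
Notation ratio n := `| Q n th / Q n (- th) |.

Let a n := Q n th.
Let b n := (-1) ^+ n * Q n (- th).
Let cross n := a n.+1 * b n - a n * b n.+1.

Let b_rec n : p n * b n.+1 = (th + r n) * b n - q n * b n.-1.
Proof.
case: n => [|n]; last by rewrite /b !exprS mulrCA Qn_rec //=; ring.
by rewrite /b expr0 expr1 !mul1r Qn1 Qn0 q0 mul0r subr0; field; rewrite gt_eqF.
Qed.

Let cross_rec n : p n * cross n = -2 * r n * a n * b n + q n * cross n.-1.
Proof.
transitivity ((p n * a n.+1) * b n - a n * (p n * b n.+1)); first by rewrite /cross; ring.
rewrite /a Qn_rec // -/(a n) b_rec.
case: n => [|n] /=; last by rewrite /cross /a /b; ring.
by rewrite q0 !mul0r !subr0 addr0; ring.
Qed.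

Let b_gt0_cross_le0 n : 0 < b n /\ cross n <= 0.
Proof.
elim: n => [|n [b_gt0 cross_le0]].
  have b0 : b 0%N = 1 by rewrite /b expr0 mul1r Qn0.
  split; first by rewrite b0.
  have := cross_rec 0; rewrite q0 mul0r addr0 b0 /a Qn0 mulr1.
  by have := p_gt0 0; have := r_ge0 0; nra.
have bS_gt0 : 0 < b n.+1.
  by have := Qth_gt0 n; have := Qth_gt0 n.+1; move: cross_le0; rewrite /cross /a; nra.
split => //; rewrite -(pmulr_rle0 _ (p_gt0 n.+1)) cross_rec /=.
have : 0 <= r n.+1 * a n.+1 * b n.+1.
  by apply: mulr_ge0; [apply: mulr_ge0|];
    [exact: r_ge0|exact: ltW (Qth_gt0 _)|exact: ltW].
have : q n.+1 * cross n <= 0 by rewrite pmulr_rle0.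
lra.
Qed.

Let b_gt0 n : 0 < b n. Proof. by case: (b_gt0_cross_le0 n). Qed.

Let ratioE n : ratio n = a n / b n.
Proof.
have -> : Q n (- th) = (-1) ^+ n * b n.
  by rewrite /b mulrA -exprMn mulrNN mulr1 expr1n mul1r.
rewrite normrM normfV normrM normrX normrN1 expr1n mul1r.
by rewrite !gtr0_norm // /a.
Qed.

Let ratio_sub n : ratio n - ratio n.+1 = - cross n / (b n * b n.+1).
Proof. by rewrite !ratioE /cross; field; rewrite !gt_eqF. Qed.

Lemma ratio_nonincreasing n : ratio n.+1 <= ratio n.
Proof.
rewrite -subr_ge0 ratio_sub; apply: divr_ge0; last by rewrite mulr_ge0 ?ltW.
by rewrite oppr_ge0; case: (b_gt0_cross_le0 n).
Qed.

Lemma ratio_lt_of_r_gt0 j : 0 < r j -> ratio j.+1 < ratio j.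
Proof.
move=> rj; rewrite -subr_gt0 ratio_sub; apply: divr_gt0; last exact: mulr_gt0.
rewrite oppr_gt0.
have qcross_le0 : q j * cross j.-1 <= 0.
  case: j {rj} => [|j]; first by rewrite q0 mul0r.
  by rewrite pmulr_rle0 //; case: (b_gt0_cross_le0 j).
rewrite -(pmulr_rlt0 _ (p_gt0 j)) cross_rec.
have := mulr_gt0 (mulr_gt0 rj (Qth_gt0 j)) (b_gt0 j).
lra.
Qed.

Lemma ratio_eq1_of_r_eq0 : (forall j, r j = 0) -> forall n, ratio n = 1.
Proof.
move=> r0 n; rewrite QnN // normrM normfV normrM normrX normrN1 expr1n mul1r.
by rewrite divff // normr_eq0 gt_eqF.
Qed.

End Ratio.

Section Support.
Context {R : realType}.
Context {psi : probability R R}.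
Hypothesis psi_out : psi (~` `[-1, 1]) = 0%E.

Lemma msupport_sub_itv : msupport psi `<=` `[-1, 1].
Proof.
move=> x supp_x; apply/not_notP => x_out.
have : (0 < psi (~` `[(-1)%R, 1%R]))%E.
  by apply: supp_x => //; apply: closed_openC; exact: interval_closed.
by rewrite psi_out ltxx.
Qed.

Hypothesis msupport_neq0 : msupport psi !=set0.

Let has_sup_msupport : has_sup (msupport psi).
Proof.
split=> //; exists 1 => x /msupport_sub_itv.
by rewrite /= in_itv /= => /andP[].
Qed.

Lemma msupport_le_sup x : msupport psi x -> x <= sup (msupport psi).
Proof. exact: sup_upper_bound. Qed.

Let charged := [set u : R | (0 < psi `]u, +oo[%classic)%E].

Let charged_has_sup s : charged s -> has_sup charged.
Proof.
move=> s_charged; split; first by exists s.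
exists 1 => u u_charged; rewrite leNgt; apply/negP => u_gt1.
have : (psi `]u, +oo[%classic <= psi (~` `[(-1)%R, 1%R]))%E.
  apply: le_measure; rewrite ?inE; [exact: measurable_itv|exact: measurableC|].
  by move=> y; rewrite /= !in_itv /= andbT => uy /andP[_]; lra.
by rewrite psi_out leNgt u_charged.
Qed.

Let sup_charged_msupport s : charged s -> msupport psi (sup charged).
Proof.
move=> s_charged; set s0 := sup charged.
have has_sup_charged := charged_has_sup _ s_charged.
move=> U oU Us0.
have /nbhs_ballP[e /= e_gt0 ball_U] : nbhs s0 U by exact: open_nbhs_nbhs.
have [u u_charged] := sup_adherent e_gt0 has_sup_charged; rewrite -/s0 => s0_u.
have far0 : psi `](s0 + e / 2), +oo[%classic = 0%E.
  apply/eqP; rewrite eq_le measure_ge0 andbT leNgt; apply/negP => far_charged.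
  by have := sup_upper_bound has_sup_charged far_charged; rewrite -/s0; lra.
have tail_sub : `]u, +oo[%classic `<=` U `|` `](s0 + e / 2), +oo[%classic.
  move=> y; rewrite /= !in_itv /= !andbT => uy.
  have [ys0e|] := ltP y (s0 + e); last by right; lra.
  by left; apply: ball_U; rewrite ball_itv /= in_itv /=; apply/andP; split; lra.
have mU : measurable U by exact: open_measurable.
apply: (lt_le_trans u_charged); rewrite -[psi U]adde0 -far0.
have mfar : measurable `](s0 + e / 2), +oo[%classic by exact: measurable_itv.
apply: (@le_trans _ _ (psi (U `|` `](s0 + e / 2), +oo[%classic))); last exact: measureU2.
by apply: le_measure tail_sub; rewrite ?inE; [exact: measurable_itv|exact: measurableU].
Qed.

Let measure_tail_gt_sup s : sup (msupport psi) < s -> psi `]s, +oo[%classic = 0%E.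
Proof.
move=> sup_s; apply/eqP; rewrite eq_le measure_ge0 andbT leNgt; apply/negP => s_charged.
have s_le : s <= sup charged := sup_upper_bound (charged_has_sup _ s_charged) s_charged.
have /msupport_le_sup := sup_charged_msupport _ s_charged; lra.
Qed.

Lemma measure_tail_msupport t : sup (msupport psi) <= t -> psi `]t, +oo[%classic = 0%E.
Proof.
move=> sup_t.
have -> : `]t, +oo[%classic = \bigcup_k `](t + k.+1%:R^-1), +oo[%classic :> set R.
  apply/seteqP; split => y; last first.
    move=> [k _]; rewrite /= !in_itv /= !andbT; apply: lt_trans.
    by rewrite ltrDl invr_gt0 ltr0n.
  rewrite /= in_itv /= andbT => ty.
  exists (Num.truncn ((y - t)^-1)) => //; rewrite /= in_itv /= andbT.
  rewrite -ltrBrDl -[X in _ < X]invrK ltf_pV2 ?posrE ?invr_gt0 ?ltr0n ?subr_gt0 //.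
  exact: truncnS_gt.
apply/negligibleP; first by apply: bigcup_measurable => k _; exact: measurable_itv.
apply: negligible_bigcup => k; apply/negligibleP; first exact: measurable_itv.
by apply: measure_tail_gt_sup; apply: le_lt_trans sup_t _; rewrite ltrDl invr_gt0 ltr0n.
Qed.

End Support.

Section Integration.
Context {R : realType}.
Context {psi : probability R R}.
Hypothesis psi_out : psi (~` `[-1, 1]) = 0%E.

Lemma continuous_integrable (g : R -> R) :
  continuous g -> psi.-integrable setT (EFin \o g).
Proof.
move=> cg.
have m11 : measurable (`[-1, 1] : set R).
  by apply: compact_measurable; exact: segment_compact.
have mg : measurable_fun setT g by exact: continuous_measurable_fun.
have mEg : measurable_fun setT (EFin \o g) by exact/measurable_EFinP.
apply/(negligible_integrable (measurableC m11) measurableT mEg psi_out).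
rewrite setTD setCK; apply: measurable_bounded_integrable => //.
- by rewrite (le_lt_trans (probability_le1 psi m11)) ?ltry.
- exact: measurable_funS mg.
- have /compact_bounded[M [_ gM]] : compact (g @` `[-1, 1]).
    by apply: continuous_compact; [exact: continuous_subspaceT|exact: segment_compact].
  by exists M; split; rewrite ?num_real // => y My x x11; apply: gM.
Qed.

Lemma msupport_integral_eq0 (N : set R) (g : R -> R) :
  measurable N -> psi N = 0%E -> (forall x, ~ N x -> 0 <= g x) ->
  continuous g -> (\int[psi]_x (g x)%:E = 0)%E ->
  forall x, msupport psi x -> g x = 0.
Proof.
move=> mN N0 g_ge0 cg int_g0 x supp_x; apply/eqP/negP => gx_neq0.
have mg : measurable_fun (~` N) (EFin \o g).
  apply/measurable_EFinP/(measurable_funS measurableT) => //.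
  exact: continuous_measurable_fun.
have /(ae_eq_integral_abs psi (measurableC mN) mg).1 [M [mM M0 g0_off_M]] :
    (\int[psi]_(x in ~` N) `|(g x)%:E| = 0)%E.
  rewrite -int_g0 (negligible_integral mN measurableT (continuous_integrable _ cg) N0).
  rewrite setTD; apply: eq_integral => y /set_mem Ny.
  by rewrite gee0_abs // lee_fin g_ge0.
pose V := g @^-1` [set y | y != 0].
have oV : open V by apply: open_comp => [y _|]; [exact: cg|exact: open_neq].
have V_sub : V `<=` M `|` N.
  move=> y /= gy0; have [|Ny] := pselect (N y); first by right.
  by left; apply: g0_off_M => /(_ Ny) [gy]; move: gy0; rewrite /V /= gy eqxx.
have Vx : V x by apply/negP.
have := supp_x V oV Vx; apply/negP; rewrite -leNgt -(adde0 0%E) -{1}M0 -N0.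
apply: le_trans (measureU2 _ _ _) => //.
by apply: le_measure V_sub; rewrite ?inE; [exact: open_measurable|exact: measurableU].
Qed.

End Integration.

Section Zeros.
Context {R : realType}.
Context {p q r : nat -> R}.
Hypothesis p_gt0 : forall j, 0 < p j.
Hypothesis q_gt0 : forall j, 0 < q j.+1.
Hypothesis r_ge0 : forall j, 0 <= r j.
Hypothesis q0 : q 0%N = 0.
Hypothesis pqr_sum : forall j, p j + q j + r j = 1.
Context {psi : probability R R}.
Hypothesis psi_out : psi (~` `[-1, 1]) = 0%E.
Hypothesis psi_inf : infinite_set (msupport psi).
Hypothesis Qn_orth : forall n m : nat, n <> m ->
  (\int[psi]_x ((Qn p q r n x * Qn p q r m x)%:E) = 0)%E.

Notation Q := (Qn p q r).

Let Qn_continuous n : continuous (Q n).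
Proof. exact/polyfun_continuous/Qn_polyfun. Qed.

Lemma integral_Qn_mul_lower m (c : nat -> R) :
  (\int[psi]_x (Q m.+1 x * \sum_(k < m.+1) c k * Q k x)%:E = 0)%E.
Proof.
have Qint k l : psi.-integrable setT (EFin \o (fun x => Q k x * Q l x)).
  by apply: continuous_integrable => // x; apply: continuousM; exact: Qn_continuous.
rewrite (_ : (fun x => _) =
    (fun x => \sum_(k < m.+1) ((c k)%:E * (Q m.+1 x * Q k x)%:E)%E)); last first.
  apply/funext => x; rewrite mulr_sumr -sumEFin.
  by apply: eq_bigr => k _; rewrite mulrCA EFinM.
rewrite integral_sum //; last by move=> k; apply: (integrableZl measurableT); exact: Qint.
rewrite big1 // => k _; rewrite integralZl //; last exact: Qint.
transitivity ((c k)%:E * 0)%E; last by rewrite mule0.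
congr (_ * _)%E.
by apply: Qn_orth => Sm_k; have := ltn_ord k; rewrite -Sm_k ltnn.
Qed.

Lemma Qn_neq0_above_msupport n t : sup (msupport psi) <= t -> Q n t != 0.
Proof.
move=> sup_t; apply/negP => /eqP Qt.
case: n Qt => [|m] Qt; first by move/eqP: Qt; rewrite Qn0 oner_eq0.
have Qmt : Q m t != 0 by exact: Qn_neq0_of_QnS_root.
pose S x := \sum_(k < m.+1) potential p q k * Q k t * Q k x.
pose K := potential p q m * p m * Q m t.
have K_neq0 : K != 0 by rewrite !mulf_neq0 // gt_eqF // potential_gt0.
have CD x : (x - t) * S x = K * Q m.+1 x.
  by rewrite /S christoffel_darboux // Qt mulr0 subr0 /K; ring.
pose f x := (t - x) * S x ^+ 2.
have fE x : f x = Q m.+1 x * \sum_(k < m.+1) (- K * (potential p q k * Q k t)) * Q k x.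
  transitivity (- ((x - t) * S x) * S x); first by rewrite /f; ring.
  by rewrite CD /S !mulr_sumr; apply: eq_bigr => k _; ring.
have f_poly : polyfun f.
  rewrite (funext fE); apply: polyfunM; first exact: Qn_polyfun.
  by apply: polyfun_sum => k; apply: polyfunM; [exact: polyfun_cst|exact: Qn_polyfun].
have f_supp0 : forall x, msupport psi x -> f x = 0.
  apply: (msupport_integral_eq0 psi_out _ _ (measurable_itv `]t, +oo[)).
  - exact: measure_tail_msupport psi_out (infinite_setN0 psi_inf) _ sup_t.
  - move=> x; rewrite /= in_itv /= andbT => /negP; rewrite -leNgt => xt.
    by rewrite /f mulr_ge0 ?sqr_ge0 ?subr_ge0.
  - exact: polyfun_continuous.
  - rewrite (funext fE).
    exact: (integral_Qn_mul_lower m (fun k => - K * (potential p q k * Q k t))).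
have f0 := polyfun_eq0 _ f_poly (sub_infinite_set f_supp0 psi_inf).
pose x1 := Num.max 1 (t + 1).
have QSm_x1 : Q m.+1 x1 != 0.
  by rewrite gt_eqF // Qn_gt0_ge1 // le_max lexx.
have : (x1 - t) * f x1 = - (K * Q m.+1 x1) ^+ 2 by rewrite -CD /f; ring.
rewrite f0 mulr0 => /esym/eqP; rewrite oppr_eq0 sqrf_eq0.
by rewrite mulf_eq0 (negbTE K_neq0) (negbTE QSm_x1).
Qed.

Lemma Qn_gt0_above_msupport n t : sup (msupport psi) <= t -> 0 < Q n t.
Proof.
move=> sup_t; apply: (@continuous_gt0_noroot_ge _ _ _ (Num.max 1 t)).
- exact: Qn_continuous.
- by move=> x tx; apply: Qn_neq0_above_msupport; exact: le_trans tx.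
- by rewrite le_max lexx orbT.
- by rewrite Qn_gt0_ge1 // le_max lexx.
Qed.

End Zeros.

Theorem lemma2 (R : realType) (p q r : nat -> R)
  (hp : forall j, 0 < p j) (hq : forall j, 0 < q j.+1) (hr : forall j, 0 <= r j)
  (hq0 : q 0%N = 0) (hsum : forall j, p j + q j + r j = 1)
  (psi : probability R R)
  (hpsi_supp : psi (~` `[-1, 1]) = 0%E)
  (hpsi_inf : infinite_set (msupport psi))
  (hpsi_orth : forall n m : nat, n <> m ->
     (\int[psi]_x ((Qn p q r n x * Qn p q r m x)%:E) = 0)%E)
  (theta : R) (htheta : sup (msupport psi) <= theta) :
  ((forall j, r j = 0) ->
     forall n, `| Qn p q r n theta / Qn p q r n (- theta) | = 1) /\
  ((exists j, 0 < r j) ->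
     (forall n, `| Qn p q r n.+1 theta / Qn p q r n.+1 (- theta) |
                <= `| Qn p q r n theta / Qn p q r n (- theta) |) /\
     exists l : R,
       (fun n => `| Qn p q r n theta / Qn p q r n (- theta) |) @ \oo --> l
       /\ 0 <= l < 1).
Proof.
have Qth_gt0 n : 0 < Qn p q r n theta.
  exact: (Qn_gt0_above_msupport hp hq hr hq0 hsum hpsi_supp hpsi_inf hpsi_orth
    n theta htheta).
split; first exact: ratio_eq1_of_r_eq0.
move=> [j rj]; have ratio_noninc := ratio_nonincreasing hp hq hr hq0 Qth_gt0.
have ratio_le1 n : `| Qn p q r n theta / Qn p q r n (- theta) | <= 1.
  elim: n => [|n IH]; first by rewrite !Qn0 divr1 normr1.
  exact: le_trans (ratio_noninc n) IH.
split=> //; apply: (nonincreasing_cvgn_lt _ j.+1).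
- exact/nonincreasing_seqP.
- by move=> n; exact: normr_ge0.
- exact: lt_le_trans (ratio_lt_of_r_gt0 hp hq hr hq0 Qth_gt0 j rj) (ratio_le1 j).
Qed.
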